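(* Let $\{\mathcal S,\mathcal C,\mathcal R,\mathcal K(t)\}$ with $\mathcal S=\{S_1,\dots,S_N\}$ be a weakly reversible non-autonomous mass-action system with bounded kinetics whose network consists of a single linkage class. Then for each $x_0\in\mathbb R^N_{>0}$, the solution $\phi(t,x_0)$ satisfies $\limsup_{t\to\infty}|\phi(t,x_0)|<\infty$; that is, the system has bounded trajectories.
   Context: A chemical reaction network on species $S_1,\dots,S_N$ consists of a finite set $\mathcal C\subset\mathbb Z^N_{\ge0}$ of complexes and a finite set $\mathcal R$ of reactions $y\to y'$ with $y,y'\in\mathcal C$, $y\ne y'$, such that every species has positive coefficient in some complex and every complex appears in some reaction; reactions are enumerated $y_k\to y_k'$. The reaction diagram is the directed graph on $\mathcal C$ with an edge for each reaction; its connected components are the linkage classes; the network is weakly reversible if each linkage class is strongly connected. A non-autonomous mass-action system with bounded kinetics is such a network with functions $\kappa_k:[0,\infty)\to\mathbb R$ and $\eta>0$ such that $\eta<\kappa_k(t)<1/\eta$ for all $t\ge0$, $k$, and dynamics $\dot x(t)=\sum_k\kappa_k(t)x(t)^{y_k}(y_k'-y_k)$, where $x^{y}=\prod_ix_i^{y_i}$ ($0^0=1$). $\phi(t,x_0)$ denotes the solution with initial condition $x_0$. *)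

From Stdlib Require Import Reals List Relations Arith.
Import ListNotations.
Open Scope R_scope.

(* A complex is a list of N natural coefficients; coefficient of species i
   (0-based) is [coef y i]. *)
Definition coef (y : list nat) (i : nat) : nat := nth i y 0%nat.

(* A reaction network on N species: a duplicate-free list of complexes and a
   list of reactions, each reaction being a pair (a, b) of indices into the
   complex list, meaning y_a -> y_b. *)
Record network := mkNetwork {
  complexes : list (list nat);
  reactions : list (nat * nat)
}.

Definition is_network (N : nat) (G : network) : Prop :=
  NoDup (complexes G) /\
  (forall y, In y (complexes G) -> length y = N) /\
  (forall r, In r (reactions G) ->
     (fst r < length (complexes G))%nat /\ (snd r < length (complexes G))%nat
     /\ fst r <> snd r) /\
  (forall i, (i < N)%nat -> exists y, In y (complexes G) /\ (0 < coef y i)%nat) /\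
  (forall a, (a < length (complexes G))%nat ->
     exists r, In r (reactions G) /\ (fst r = a \/ snd r = a)).

Definition edge (G : network) (a b : nat) : Prop := In (a, b) (reactions G).

Definition reach (G : network) : nat -> nat -> Prop :=
  clos_refl_trans nat (edge G).

Definition linked (G : network) : nat -> nat -> Prop :=
  clos_refl_trans nat (fun a b => edge G a b \/ edge G b a).

Definition weakly_reversible (G : network) : Prop :=
  forall a b, (a < length (complexes G))%nat -> (b < length (complexes G))%nat ->
    linked G a b -> reach G a b.

Definition single_linkage_class (G : network) : Prop :=
  forall a b, (a < length (complexes G))%nat -> (b < length (complexes G))%nat ->
    linked G a b.

Definition bounded_kinetics (G : network) (kappa : nat -> R -> R) : Prop :=
  exists eta, 0 < eta /\
    forall k t, (k < length (reactions G))%nat -> 0 <= t ->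
      eta < kappa k t /\ kappa k t < / eta.

(* x^y = prod_i x_i^{y_i}  (pow x 0 = 1, so 0^0 = 1) *)
Definition monomial (N : nat) (y : list nat) (x : nat -> R) : R :=
  fold_right Rmult 1 (map (fun i => x i ^ coef y i) (seq 0 N)).

Definition cplx (G : network) (a : nat) : list nat := nth a (complexes G) [].

Definition mass_action_rhs (N : nat) (G : network) (kappa : nat -> R -> R)
    (t : R) (x : nat -> R) (i : nat) : R :=
  fold_right Rplus 0
    (map (fun k =>
       let r := nth k (reactions G) (0%nat, 0%nat) in
       kappa k t * monomial N (cplx G (fst r)) x *
         (INR (coef (cplx G (snd r)) i) - INR (coef (cplx G (fst r)) i)))
     (seq 0 (length (reactions G)))).

Definition is_solution (N : nat) (G : network) (kappa : nat -> R -> R)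
    (x0 : nat -> R) (phi : R -> nat -> R) : Prop :=
  (forall i, (i < N)%nat -> phi 0 i = x0 i) /\
  (forall t i, 0 <= t -> (i < N)%nat ->
     derivable_pt_lim (fun s => phi s i) t (mass_action_rhs N G kappa t (phi t) i)).

Definition vnorm (N : nat) (x : nat -> R) : R :=
  sqrt (fold_right Rplus 0 (map (fun i => x i ^ 2) (seq 0 N))).

(* Along a positive trajectory the free energy [V x = sum_i (x_i ln x_i - x_i)] has derivative
   [sum_k kappa_k e^(l y_k) (l y'_k - l y_k)], where [l y = <y, ln x>].  In a strongly connected
   reaction graph with rates in (eta, 1/eta) this flux is nonpositive unless all the values [l y]
   lie within a constant of each other: otherwise some reaction leaves the top tier of values across
   a gap wide enough to outweigh all the other terms.  When the [l y] are that close, every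
   [<y'_k - y_k, ln x>] is bounded, which confines [x] to a compact part of its stoichiometric class
   [x0 + span (y'_k - y_k)], where [V] is bounded.  Hence [V], and with it [x], stays bounded. *)

From Stdlib Require Import Reals List Relations Lra Lia Classical.
Open Scope R_scope.

(** * Finite sums and products *)

Fixpoint sumR (n : nat) (f : nat -> R) : R :=
  match n with O => 0 | S m => sumR m f + f m end.

Fixpoint prodR (n : nat) (f : nat -> R) : R :=
  match n with O => 1 | S m => prodR m f * f m end.

Lemma fold_right_Rplus_seq n f : fold_right Rplus 0 (map f (seq 0 n)) = sumR n f.
Proof.
  induction n as [|n IHn]; [reflexivity|].
  rewrite seq_S, map_app, fold_right_app; simpl. rewrite <- IHn.
  generalize (f n); clear. induction (map f (seq 0 n)) as [|a l IHl]; simpl; intros; [lra|].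
  rewrite IHl; lra.
Qed.

Lemma fold_right_Rmult_seq n f : fold_right Rmult 1 (map f (seq 0 n)) = prodR n f.
Proof.
  induction n as [|n IHn]; [reflexivity|].
  rewrite seq_S, map_app, fold_right_app; simpl. rewrite <- IHn.
  generalize (f n); clear. induction (map f (seq 0 n)) as [|a l IHl]; simpl; intros; [lra|].
  rewrite IHl; lra.
Qed.

Lemma sumR_ext n f g : (forall i, (i < n)%nat -> f i = g i) -> sumR n f = sumR n g.
Proof.
  induction n; simpl; intros H; auto.
  rewrite IHn, H; auto with arith.
Qed.

Lemma prodR_ext n f g : (forall i, (i < n)%nat -> f i = g i) -> prodR n f = prodR n g.
Proof.
  induction n; simpl; intros H; auto.
  rewrite IHn, H; auto with arith.
Qed.

Lemma sumR_le n f g : (forall i, (i < n)%nat -> f i <= g i) -> sumR n f <= sumR n g.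
Proof.
  induction n; simpl; intros H; [lra|].
  apply Rplus_le_compat; [apply IHn; intros|]; apply H; lia.
Qed.

Lemma sumR_plus n f g : sumR n (fun i => f i + g i) = sumR n f + sumR n g.
Proof. induction n; simpl; [|rewrite IHn]; lra. Qed.

Lemma sumR_minus n f g : sumR n (fun i => f i - g i) = sumR n f - sumR n g.
Proof. induction n; simpl; [|rewrite IHn]; lra. Qed.

Lemma sumR_scal_l n c f : sumR n (fun i => c * f i) = c * sumR n f.
Proof. induction n; simpl; [|rewrite IHn]; lra. Qed.

Lemma sumR_scal_r n c f : sumR n (fun i => f i * c) = sumR n f * c.
Proof. induction n; simpl; [|rewrite IHn]; lra. Qed.

Lemma sumR_const n c : sumR n (fun _ => c) = INR n * c.
Proof. induction n; [simpl; lra|]. rewrite S_INR; simpl; rewrite IHn; lra. Qed.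

Lemma sumR_eq0 n f : (forall i, (i < n)%nat -> f i = 0) -> sumR n f = 0.
Proof. intros H. rewrite (sumR_ext n f (fun _ => 0)), sumR_const by auto. lra. Qed.

Lemma sumR_nonneg n f : (forall i, (i < n)%nat -> 0 <= f i) -> 0 <= sumR n f.
Proof. intros H. rewrite <- (sumR_eq0 n (fun _ => 0)) by auto. now apply sumR_le. Qed.

Lemma sumR_exchange n m (f : nat -> nat -> R) :
  sumR n (fun i => sumR m (fun j => f i j)) = sumR m (fun j => sumR n (fun i => f i j)).
Proof.
  induction n; simpl; [symmetry; now apply sumR_eq0|].
  now rewrite IHn, <- sumR_plus.
Qed.

Lemma sumR_ge_term n f i : (i < n)%nat -> (forall j, (j < n)%nat -> 0 <= f j) -> f i <= sumR n f.
Proof.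
  induction n; simpl; intros Hi H; [lia|].
  assert (0 <= sumR n f) by (apply sumR_nonneg; intros; apply H; lia).
  destruct (Nat.eq_dec i n) as [->|]; [lra|].
  assert (f i <= sumR n f) by (apply IHn; [lia|intros; apply H; lia]).
  assert (0 <= f n) by (apply H; lia). lra.
Qed.

Lemma sumR_le_term_plus n f c k : (k < n)%nat -> 0 <= c -> (forall i, (i < n)%nat -> f i <= c) ->
  sumR n f <= f k + INR n * c.
Proof.
  induction n; intros Hk Hc H; [lia|]. rewrite S_INR. simpl sumR.
  destruct (Nat.eq_dec k n) as [->|].
  - assert (sumR n f <= INR n * c); [|lra].
    rewrite <- sumR_const. apply sumR_le; intros; apply H; lia.
  - assert (sumR n f <= f k + INR n * c) by (apply IHn; [lia|auto|intros; apply H; lia]).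
    assert (f n <= c) by (apply H; lia). lra.
Qed.

Lemma Rabs_sumR_le n f : Rabs (sumR n f) <= sumR n (fun i => Rabs (f i)).
Proof.
  induction n; simpl; [rewrite Rabs_R0; lra|].
  eapply Rle_trans; [apply Rabs_triang|lra].
Qed.

Lemma sumR_sqr_eq0 n f : sumR n (fun j => f j * f j) = 0 -> forall j, (j < n)%nat -> f j = 0.
Proof.
  induction n; simpl; intros H j Hj; [lia|].
  assert (0 <= sumR n (fun j => f j * f j)) by (apply sumR_nonneg; intros; nra).
  destruct (Nat.eq_dec j n) as [->|]; [nra|]. apply IHn; [nra|lia].
Qed.

Lemma prodR_nonneg n f : (forall i, (i < n)%nat -> 0 <= f i) -> 0 <= prodR n f.
Proof.
  induction n; simpl; intros H; [lra|].
  apply Rmult_le_pos; [apply IHn; intros|]; apply H; lia.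
Qed.

Lemma prodR_exp n f : prodR n (fun i => exp (f i)) = exp (sumR n f).
Proof. induction n; simpl; [now rewrite exp_0|]. now rewrite IHn, exp_plus. Qed.

Lemma derivable_pt_lim_sumR n (F : R -> nat -> R) F' t :
  (forall i, (i < n)%nat -> derivable_pt_lim (fun s => F s i) t (F' i)) ->
  derivable_pt_lim (fun s => sumR n (F s)) t (sumR n F').
Proof.
  induction n; simpl; intros H; [apply derivable_pt_lim_const|].
  apply (derivable_pt_lim_plus (fun s => sumR n (F s)) (fun s => F s n));
    [apply IHn; intros|]; apply H; lia.
Qed.

Lemma derivable_pt_lim_mult_r f c t l : derivable_pt_lim f t l ->
  derivable_pt_lim (fun s => f s * c) t (l * c).
Proof.
  intros H. replace (l * c) with (l * c + f t * 0) by ring.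
  apply (derivable_pt_lim_mult f (fun _ => c)); [auto|apply derivable_pt_lim_const].
Qed.

Lemma continuity_pt_sumR n (F : R -> nat -> R) t :
  (forall i, (i < n)%nat -> continuity_pt (fun s => F s i) t) ->
  continuity_pt (fun s => sumR n (F s)) t.
Proof.
  induction n; simpl; intros H; [now apply continuity_pt_const|].
  apply (continuity_pt_plus (fun s => sumR n (F s)) (fun s => F s n));
    [apply IHn; intros|]; apply H; lia.
Qed.

Lemma continuity_pt_prodR n (F : R -> nat -> R) t :
  (forall i, (i < n)%nat -> continuity_pt (fun s => F s i) t) ->
  continuity_pt (fun s => prodR n (F s)) t.
Proof.
  induction n; simpl; intros H; [now apply continuity_pt_const|].
  apply (continuity_pt_mult (fun s => prodR n (F s)) (fun s => F s n));
    [apply IHn; intros|]; apply H; lia.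
Qed.

(* [minR 0 f = 1], so that [0 < minR n f] says exactly that [f] is positive below [n]. *)
Fixpoint minR (n : nat) (f : nat -> R) : R :=
  match n with O => 1 | S m => Rmin (minR m f) (f m) end.

Lemma minR_pos n f : (forall i, (i < n)%nat -> 0 < f i) -> 0 < minR n f.
Proof.
  induction n; simpl; intros H; [lra|].
  apply Rmin_glb_lt; [apply IHn; intros|]; apply H; lia.
Qed.

Lemma minR_le n f i : (i < n)%nat -> minR n f <= f i.
Proof.
  induction n; simpl; intros H; [lia|].
  destruct (Nat.eq_dec i n) as [->|]; [apply Rmin_r|].
  eapply Rle_trans; [apply Rmin_l|apply IHn; lia].
Qed.

Lemma minR_nonpos n f : minR n f <= 0 -> exists i, (i < n)%nat /\ f i <= 0.
Proof.
  intros H. apply NNPP. intro Hn. assert (0 < minR n f); [|lra].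
  apply minR_pos. intros i Hi. apply Rnot_le_lt. intro; apply Hn; now exists i.
Qed.

(** * Continuity, first exit times and differential inequalities *)

Lemma derivable_pt_lim_continuity_pt f x l : derivable_pt_lim f x l -> continuity_pt f x.
Proof. intros H. apply derivable_continuous_pt. now exists l. Qed.

Lemma continuity_pt_pos_nbhd f x : continuity_pt f x -> 0 < f x ->
  exists del, 0 < del /\ forall y, Rabs (y - x) < del -> 0 < f y.
Proof.
  intros H Hx. destruct (H (f x / 2)) as [alp [Halp Hal]]; [lra|].
  exists alp; split; auto. intros y Hy.
  destruct (Req_dec y x) as [->|Hyx]; auto.
  assert (Hd : R_dist (f y) (f x) < f x / 2) by (apply (Hal y); repeat split; auto).
  unfold R_dist in Hd. apply Rabs_def2 in Hd. lra.
Qed.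

Lemma continuity_pt_pow f t n : continuity_pt f t -> continuity_pt (fun s => f s ^ n) t.
Proof.
  intros H. induction n; simpl; [now apply continuity_pt_const|].
  now apply (continuity_pt_mult f (fun s => f s ^ n)).
Qed.

Lemma continuity_pt_Rmin f g t : continuity_pt f t -> continuity_pt g t ->
  continuity_pt (fun s => Rmin (f s) (g s)) t.
Proof.
  intros Hf Hg.
  apply (continuity_pt_locally_ext (fun s => (f s + g s - Rabs (f s - g s)) / 2) _ 1 t); [lra| |].
  - intros y _. unfold Rmin. destruct (Rle_dec (f y) (g y));
      [rewrite Rabs_left1|rewrite Rabs_right]; lra.
  - apply continuity_pt_div; [|now apply continuity_pt_const|lra].
    apply continuity_pt_minus; [now apply continuity_pt_plus|].
    apply (continuity_pt_comp (fun s => f s - g s) Rabs); [now apply continuity_pt_minus|].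
    apply Rcontinuity_abs.
Qed.

Lemma continuity_pt_minR n (F : R -> nat -> R) t :
  (forall i, (i < n)%nat -> continuity_pt (fun s => F s i) t) ->
  continuity_pt (fun s => minR n (F s)) t.
Proof.
  induction n; simpl; intros H; [now apply continuity_pt_const|].
  apply (continuity_pt_Rmin (fun s => minR n (F s)) (fun s => F s n));
    [apply IHn; intros|]; apply H; lia.
Qed.

Lemma first_nonpos_time (h : R -> R) a b : a <= b ->
  (forall t, a <= t <= b -> continuity_pt h t) -> 0 < h a -> h b <= 0 ->
  exists ts, a < ts <= b /\ h ts <= 0 /\ forall s, a <= s < ts -> 0 < h s.
Proof.
  intros Hab Hc Ha Hb.
  set (E := fun s => a <= s <= b /\ forall r, a <= r <= s -> 0 < h r).
  assert (HEa : E a) by (split; [lra|intros r Hr; now replace r with a by lra]).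
  assert (HEb : bound E) by (exists b; intros s [Hs _]; lra).
  destruct (completeness E HEb (ex_intro _ a HEa)) as [ts [Hub Hlub]].
  assert (Hts1 : a <= ts) by now apply Hub.
  assert (Hts2 : ts <= b) by (apply Hlub; intros s [Hs _]; lra).
  assert (Hbelow : forall s, a <= s < ts -> 0 < h s).
  { intros s Hs. destruct (classic (exists e, E e /\ s < e)) as [[e [[_ He] Hse]]|Hno].
    - apply He; lra.
    - assert (ts <= s); [|lra]. apply Hlub. intros e He.
      destruct (Rle_dec e s); auto. exfalso; apply Hno; exists e; split; auto; lra. }
  assert (Hhts : h ts <= 0).
  { destruct (Rle_dec (h ts) 0) as [|Hpos]; auto. apply Rnot_le_lt in Hpos.
    destruct (Req_dec ts b) as [->|]; [lra|].
    destruct (continuity_pt_pos_nbhd h ts (Hc ts ltac:(lra)) Hpos) as [del [Hdel Hd]].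
    set (s' := Rmin b (ts + del / 2)).
    assert (ts < s') by (apply Rmin_glb_lt; lra).
    assert (s' <= b) by apply Rmin_l. assert (s' <= ts + del / 2) by apply Rmin_r.
    assert (E s').
    { split; [lra|]. intros r Hr. destruct (Rlt_dec r ts); [apply Hbelow; lra|].
      apply Hd. rewrite Rabs_right; lra. }
    assert (s' <= ts) by now apply Hub. lra. }
  exists ts. repeat split; auto.
  destruct Hts1 as [|<-]; [auto|lra].
Qed.

Lemma le_of_deriv_nonpos_above (V V' : R -> R) c :
  (forall s, 0 <= s -> derivable_pt_lim V s (V' s)) ->
  (forall s, 0 <= s -> c < V s -> V' s <= 0) ->
  V 0 <= c -> forall t, 0 <= t -> V t <= c.
Proof.
  intros HV HV' HV0 t1 Ht1. apply Rnot_lt_le; intro Hgt.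
  destruct (first_nonpos_time (fun s => V (t1 - s) - c) 0 t1 Ht1)
    as [ts [[Hts0 Hts1] [Hhts Hbef]]].
  - intros s Hs. apply continuity_pt_minus; [|now apply continuity_pt_const].
    apply (continuity_pt_comp (fun s => t1 - s) V).
    + apply continuity_pt_minus; [now apply continuity_pt_const|apply derivable_continuous_pt, derivable_pt_id].
    + apply (derivable_pt_lim_continuity_pt _ _ (V' (t1 - s))), HV; lra.
  - simpl. rewrite Rminus_0_r. lra.
  - simpl. rewrite Rminus_diag. lra.
  - destruct (MVT_cor2 V V' (t1 - ts) t1 ltac:(lra) (fun r Hr => HV r ltac:(lra)))
      as [xi [Hmvt Hxi]].
    assert (c < V xi).
    { specialize (Hbef (t1 - xi) ltac:(lra)). simpl in Hbef.
      replace (t1 - (t1 - xi)) with xi in Hbef by ring. lra. }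
    assert (V' xi <= 0) by (apply HV'; lra).
    simpl in Hhts. replace (t1 - (t1 - ts)) with ts in Hmvt by ring. nra.
Qed.

(* Gronwall: [f e^(C s)] is nondecreasing when [f' >= - C f]. *)
Lemma pos_of_deriv_ge_linear (f f' : R -> R) C b : 0 < b ->
  (forall s, 0 <= s <= b -> derivable_pt_lim f s (f' s)) ->
  (forall s, 0 < s < b -> - C * f s <= f' s) -> 0 < f 0 -> 0 < f b.
Proof.
  intros Hb Hf Hf' Hf0.
  set (z := fun s => f s * exp (C * s)).
  set (z' := fun s => f' s * exp (C * s) + f s * (exp (C * s) * (C * 1))).
  assert (Hz : forall s, 0 <= s <= b -> derivable_pt_lim z s (z' s)).
  { intros s Hs. apply (derivable_pt_lim_mult f (fun s => exp (C * s))); [now apply Hf|].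
    apply (derivable_pt_lim_comp (fun s => C * s) exp), derivable_pt_lim_exp.
    apply (derivable_pt_lim_scal id), derivable_pt_lim_id. }
  destruct (MVT_cor2 z z' 0 b Hb Hz) as [c [Hmvt Hc]].
  assert (0 <= z' c).
  { unfold z'. specialize (Hf' c Hc). pose proof (exp_pos (C * c)). nra. }
  assert (z 0 = f 0) by (unfold z; rewrite Rmult_0_r, exp_0; ring).
  pose proof (exp_pos (C * b)). unfold z in *. nra.
Qed.

(** * Linear projections onto a span *)

Definition span_proj (N m : nat) (E d : nat -> nat -> R) (z : nat -> R) (j : nat) : R :=
  sumR m (fun k => sumR N (fun i => E k i * z i) * d k j).

Definition projects_onto (N m : nat) (E d : nat -> nat -> R) : Prop :=
  forall r j, (r < m)%nat -> (j < N)%nat -> span_proj N m E d (d r) j = d r j.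

Lemma span_proj_ext N m E d z z' j : (forall i, (i < N)%nat -> z i = z' i) ->
  span_proj N m E d z j = span_proj N m E d z' j.
Proof.
  intros H. apply sumR_ext. intros k _. f_equal.
  apply sumR_ext. intros i Hi. now rewrite H.
Qed.

Lemma span_proj_matrixE N m E d z j :
  span_proj N m E d z j = sumR N (fun i => sumR m (fun k => d k j * E k i) * z i).
Proof.
  unfold span_proj.
  rewrite (sumR_ext m _ (fun k => sumR N (fun i => E k i * z i * d k j)))
    by (intros; now rewrite sumR_scal_r).
  rewrite sumR_exchange. apply sumR_ext. intros i _.
  rewrite <- sumR_scal_r. apply sumR_ext; intros; ring.
Qed.

Lemma span_proj_lincomb N m E d (f : nat -> R) : projects_onto N m E d ->
  forall j, (j < N)%nat ->
  span_proj N m E d (fun i => sumR m (fun r => f r * d r i)) j = sumR m (fun r => f r * d r j).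
Proof.
  intros H j Hj. unfold span_proj.
  rewrite (sumR_ext m _ (fun k => sumR m (fun r => f r * sumR N (fun i => E k i * d r i)) * d k j)).
  2:{ intros k _. f_equal.
      rewrite (sumR_ext N _ (fun i => sumR m (fun r => E k i * (f r * d r i))))
        by (intros; now rewrite sumR_scal_l).
      rewrite sumR_exchange. apply sumR_ext. intros r _.
      rewrite <- sumR_scal_l. apply sumR_ext; intros; ring. }
  rewrite (sumR_ext m _ (fun k => sumR m (fun r => f r * (sumR N (fun i => E k i * d r i) * d k j))))
    by (intros; rewrite <- sumR_scal_r; apply sumR_ext; intros; ring).
  rewrite sumR_exchange. apply sumR_ext. intros r Hr.
  rewrite sumR_scal_l. f_equal. apply H; auto.
Qed.

Lemma span_proj_residual_inner N m E d (rho z : nat -> R) :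
  sumR N (fun i => (rho i - sumR N (fun j => rho j * sumR m (fun k => d k j * E k i))) * z i)
  = sumR N (fun j => rho j * (z j - span_proj N m E d z j)).
Proof.
  rewrite (sumR_ext N _ (fun i => rho i * z i
             - sumR N (fun j => rho j * sumR m (fun k => d k j * E k i) * z i)))
    by (intros; rewrite sumR_scal_r; ring).
  rewrite (sumR_ext N (fun j => rho j * (z j - _)) (fun j => rho j * z j
             - sumR N (fun i => rho j * sumR m (fun k => d k j * E k i) * z i))).
  2:{ intros j _. rewrite span_proj_matrixE, Rmult_minus_distr_l, <- sumR_scal_l.
      f_equal. apply sumR_ext; intros; ring. }
  rewrite !sumR_minus. f_equal. apply sumR_exchange.
Qed.

Lemma projects_onto_extend_fixed N m E' d : projects_onto N m E' d ->
  (forall j, (j < N)%nat -> span_proj N m E' d (d m) j = d m j) ->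
  projects_onto N (S m) (fun k i => if (k <? m)%nat then E' k i else 0) d.
Proof.
  intros HE' Hm r j Hr Hj. unfold span_proj. simpl sumR. rewrite Nat.ltb_irrefl.
  rewrite (sumR_eq0 N (fun i => 0 * d r i)) by (intros; ring).
  erewrite sumR_ext by (intros k Hk; apply Nat.ltb_lt in Hk; now rewrite Hk).
  rewrite Rmult_0_l, Rplus_0_r.
  destruct (Nat.eq_dec r m) as [->|]; [now apply Hm|apply HE'; [lia|auto]].
Qed.

(* Gram-Schmidt step: with [P] the projection of [E'] and [rho = d_m - P d_m], the map
   [z |-> P z + lam(z) rho] with [lam(z) = <rho, z - P z> / |rho|^2] also fixes [d_m]. *)
Lemma projects_onto_extend N m E' d : projects_onto N m E' d ->
  exists E, projects_onto N (S m) E d.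
Proof.
  intros HE'.
  set (rho := fun j => d m j - span_proj N m E' d (d m) j).
  set (s := sumR N (fun j => rho j * rho j)).
  destruct (Req_dec s 0) as [Hs|Hs].
  - exists (fun k i => if (k <? m)%nat then E' k i else 0).
    apply projects_onto_extend_fixed; auto. intros j Hj.
    pose proof (sumR_sqr_eq0 N rho Hs j Hj). unfold rho in *. lra.
  - set (lam := fun i => / s * (rho i - sumR N (fun j => rho j * sumR m (fun k => d k j * E' k i)))).
    assert (Hlam : forall z, sumR N (fun i => lam i * z i)
                           = / s * sumR N (fun j => rho j * (z j - span_proj N m E' d z j))).
    { intros z. rewrite <- span_proj_residual_inner, <- sumR_scal_l.
      apply sumR_ext; intros; unfold lam; ring. }
    set (ev := fun k => sumR N (fun i => E' k i * d m i)).
    exists (fun k i => if (k <? m)%nat then E' k i - lam i * ev k else lam i).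
    intros r j Hr Hj. unfold span_proj. simpl sumR. rewrite Nat.ltb_irrefl.
    rewrite (sumR_ext m _ (fun k => sumR N (fun i => E' k i * d r i) * d k j
                                  - sumR N (fun i => lam i * d r i) * (ev k * d k j))).
    2:{ intros k Hk. apply Nat.ltb_lt in Hk. rewrite Hk.
        rewrite <- Rmult_assoc, <- Rmult_minus_distr_r. f_equal.
        rewrite <- sumR_scal_r, <- sumR_minus. apply sumR_ext; intros; ring. }
    rewrite sumR_minus, sumR_scal_l. fold (span_proj N m E' d (d r) j).
    unfold ev. fold (span_proj N m E' d (d m) j). rewrite Hlam.
    destruct (Nat.eq_dec r m) as [->|].
    + change (sumR N (fun j0 => rho j0 * (d m j0 - span_proj N m E' d (d m) j0))) with s.
      replace (/ s * s) with 1 by (field; lra). unfold rho. ring.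
    + assert (Hdr : forall j', (j' < N)%nat -> span_proj N m E' d (d r) j' = d r j')
        by (intros; apply HE'; [lia|auto]).
      rewrite (sumR_eq0 N (fun j0 => rho j0 * (d r j0 - _)))
        by (intros j' Hj'; rewrite Hdr by auto; ring).
      rewrite Hdr by auto. ring.
Qed.

Lemma projects_onto_exists N m d : exists E, projects_onto N m E d.
Proof.
  induction m as [|m [E' HE']].
  - exists (fun _ _ => 0). intros r j Hr; lia.
  - now apply projects_onto_extend with E'.
Qed.

Lemma derivable_pt_lim_span_proj N m E d (z : R -> nat -> R) z' t j :
  (forall i, (i < N)%nat -> derivable_pt_lim (fun s => z s i) t (z' i)) ->
  derivable_pt_lim (fun s => span_proj N m E d (z s) j) t (span_proj N m E d z' j).
Proof.
  intros Hz. unfold span_proj.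
  apply (derivable_pt_lim_sumR m (fun s k => sumR N (fun i => E k i * z s i) * d k j)).
  intros k _. apply derivable_pt_lim_mult_r.
  apply (derivable_pt_lim_sumR N (fun s i => E k i * z s i)).
  intros i Hi. now apply derivable_pt_lim_scal, Hz.
Qed.

(** * The flux of a graph with exponential weights *)

Definition flux (nR : nat) (a b : nat -> nat) (kap l : nat -> R) : R :=
  sumR nR (fun k => kap k * exp (l (a k)) * (l (b k) - l (a k))).

(* Chosen so that one drop across the gap outweighs [nR] gains from the top tier
   ([gap_width_spec]). *)
Definition gap_width (eta : R) (nR : nat) (th : R) : R :=
  1 + INR nR * (th + 4) * exp th / (eta * eta).

Fixpoint gap_level (eta : R) (nR j : nat) : R :=
  match j with
  | O => 0
  | S j' => gap_level eta nR j' + gap_width eta nR (gap_level eta nR j')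
  end.

Lemma gap_width_ge1 eta nR th : 0 < eta -> 0 <= th -> 1 <= gap_width eta nR th.
Proof.
  intros Heta Hth. unfold gap_width, Rdiv.
  assert (0 <= INR nR * (th + 4) * exp th * / (eta * eta)); [|lra].
  pose proof (pos_INR nR). pose proof (exp_pos th).
  assert (0 < / (eta * eta)) by (apply Rinv_0_lt_compat; nra).
  repeat apply Rmult_le_pos; lra.
Qed.

Lemma gap_level_nonneg eta nR j : 0 < eta -> 0 <= gap_level eta nR j.
Proof.
  intros Heta; induction j; simpl; [lra|].
  pose proof (gap_width_ge1 eta nR _ Heta IHj). lra.
Qed.

Lemma gap_level_mono eta nR j j' : 0 < eta -> (j <= j')%nat ->
  gap_level eta nR j <= gap_level eta nR j'.
Proof.
  intros Heta H. induction H; simpl; [lra|].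
  pose proof (gap_width_ge1 eta nR _ Heta (gap_level_nonneg eta nR m Heta)). lra.
Qed.

Lemma exp_le_compat x y : x <= y -> exp x <= exp y.
Proof. intros [H| ->]; [left; now apply exp_increasing|lra]. Qed.

Lemma sqr_le_4exp z : 0 <= z -> z * z <= 4 * exp z.
Proof.
  intros Hz. pose proof (exp_ineq1_le (z / 2)).
  replace (exp z) with (exp (z / 2) * exp (z / 2)) by (rewrite <- exp_plus; f_equal; lra).
  nra.
Qed.

(* Below the gap, [z e^(-z) <= 4 / z] makes the weight [e^u (M - u)] small. *)
Lemma exp_mul_dist_le u M th h : 0 <= th -> 0 < h -> u <= M ->
  M - th <= u \/ u < M - th - h -> exp u * (M - u) <= exp M * (th + 4 / h).
Proof.
  intros Hth Hh HuM [Htop|Hlow]; pose proof (exp_pos u); pose proof (exp_pos M).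
  - pose proof (exp_le_compat u M HuM).
    assert (0 < 4 / h) by (apply Rdiv_lt_0_compat; lra). nra.
  - set (z := M - u).
    assert (Hexpz : exp u * exp z = exp M) by (rewrite <- exp_plus; f_equal; unfold z; lra).
    pose proof (sqr_le_4exp z ltac:(unfold z; lra)).
    assert (Hz : h <= z) by (unfold z; lra).
    assert (exp u * z * h <= exp u * (z * z))
      by (rewrite Rmult_assoc; apply Rmult_le_compat_l; [lra|]; apply Rmult_le_compat_l; lra).
    assert (exp u * z * h <= 4 * exp M) by (rewrite <- Hexpz; nra).
    assert (exp u * z <= exp M * (4 / h)).
    { apply Rmult_le_reg_r with h; [lra|].
      replace (exp M * (4 / h) * h) with (4 * exp M) by (field; lra). lra. }
    nra.
Qed.

Lemma flux_term_le eta k u v M th h : 0 < eta -> 0 <= th -> 0 < h -> eta < k < / eta ->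
  u <= M -> v <= M -> M - th <= u \/ u < M - th - h ->
  k * exp u * (v - u) <= exp M * (th + 4 / h) / eta.
Proof.
  intros Heta Hth Hh [Hk1 Hk2] HuM HvM Hband.
  pose proof (exp_pos u). pose proof (exp_mul_dist_le u M th h Hth Hh HuM Hband).
  assert (0 < k * exp u) by (apply Rmult_lt_0_compat; lra).
  destruct (Rle_dec v u).
  - assert (0 <= exp M * (th + 4 / h) / eta); [|nra].
    pose proof (exp_pos M). assert (0 < 4 / h) by (apply Rdiv_lt_0_compat; lra).
    unfold Rdiv. apply Rmult_le_pos; [nra|left; now apply Rinv_0_lt_compat].
  - apply Rle_trans with (/ eta * (exp u * (M - u))).
    + apply Rle_trans with (/ eta * (exp u * (v - u))).
      * rewrite Rmult_assoc. apply Rmult_le_compat_r; nra.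
      * apply Rmult_le_compat_l; [left; now apply Rinv_0_lt_compat|].
        apply Rmult_le_compat_l; lra.
    + unfold Rdiv. rewrite Rmult_comm. apply Rmult_le_compat_r; [left; now apply Rinv_0_lt_compat|lra].
Qed.

Lemma flux_term_le_neg eta k u v M th h : 0 < eta -> 0 < h -> eta < k -> M - th <= u ->
  v - u <= - h ->
  k * exp u * (v - u) <= - (eta * exp (- th) * h * exp M).
Proof.
  intros Heta Hh Hk Hu Hvu.
  assert (exp M * exp (- th) <= exp u) by (rewrite <- exp_plus; apply exp_le_compat; lra).
  pose proof (exp_pos M). pose proof (exp_pos (- th)). pose proof (exp_pos u).
  assert (Hke : eta * (exp M * exp (- th)) <= k * exp u)
    by (apply Rmult_le_compat; nra).
  assert (k * exp u * (v - u) <= k * exp u * (- h)) by (apply Rmult_le_compat_l; nra).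
  nra.
Qed.

Lemma gap_width_spec eta nR th : 0 < eta -> 0 <= th ->
  let h := gap_width eta nR th in INR nR * ((th + 4 / h) / eta) <= eta * exp (- th) * h.
Proof.
  intros Heta Hth h. pose proof (gap_width_ge1 eta nR th Heta Hth). fold h in H.
  pose proof (pos_INR nR). pose proof (exp_pos (- th)).
  assert (Hexp : exp (- th) * exp th = 1) by (rewrite <- exp_plus, <- exp_0; f_equal; lra).
  assert (4 / h <= 4) by (unfold Rdiv; rewrite <- (Rmult_1_r 4) at 2;
    apply Rmult_le_compat_l; [lra|]; rewrite <- Rinv_1; apply Rinv_le_contravar; lra).
  apply Rle_trans with (INR nR * (th + 4) / eta).
  - unfold Rdiv. rewrite Rmult_assoc. apply Rmult_le_compat_l; [lra|].
    apply Rmult_le_compat_r; [left; now apply Rinv_0_lt_compat|lra].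
  - assert (eta * exp (- th) * (h - 1) = INR nR * (th + 4) / eta).
    { unfold h, gap_width. replace (1 + _ - 1) with (INR nR * (th + 4) * exp th / (eta * eta)) by ring.
      replace (INR nR * (th + 4) / eta) with (INR nR * (th + 4) / eta * (exp (- th) * exp th))
        by (rewrite Hexp; ring).
      field. lra. }
    nra.
Qed.

Lemma clos_refl_trans_crossing (E : nat -> nat -> Prop) (P : nat -> Prop) u v :
  clos_refl_trans nat E u v -> P u -> ~ P v -> exists c d, E c d /\ P c /\ ~ P d.
Proof.
  induction 1 as [x y|x|x y z _ IH1 _ IH2]; intros Hx Hy; [now exists x, y|contradiction|].
  destruct (classic (P y)); [apply IH2|apply IH1]; auto.
Qed.

Lemma length_filter_lt {A} (p q : A -> bool) (L : list A) :
  (forall x, In x L -> p x = true -> q x = true) ->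
  (exists x, In x L /\ q x = true /\ p x = false) ->
  (length (filter p L) < length (filter q L))%nat.
Proof.
  induction L as [|y L IHL]; simpl; intros Hpq [x [Hx [Hq Hp]]]; [contradiction|].
  assert (Hmono : forall L', (forall x, In x L' -> p x = true -> q x = true) ->
                    (length (filter p L') <= length (filter q L'))%nat).
  { clear. induction L' as [|y L' IH]; simpl; intros H; [lia|].
    specialize (IH (fun x Hx => H x (or_intror Hx))).
    destruct (p y) eqn:E; [rewrite (H y (or_introl eq_refl) E); simpl; lia|].
    destruct (q y); simpl; lia. }
  destruct Hx as [<-|Hx].
  - rewrite Hp, Hq. simpl. specialize (Hmono L (fun x Hx => Hpq x (or_intror Hx))). lia.
  - specialize (IHL (fun x Hx => Hpq x (or_intror Hx)) (ex_intro _ x (conj Hx (conj Hq Hp)))).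
    destruct (p y) eqn:E; [rewrite (Hpq y (or_introl eq_refl) E); simpl; lia|].
    destruct (q y); simpl; lia.
Qed.

Section Flux.

Variables (nR : nat) (a b : nat -> nat) (kap l : nat -> R) (eta : R).
Hypothesis Heta : 0 < eta.
Hypothesis Hkap : forall k, (k < nR)%nat -> eta < kap k < / eta.

(* If no source lies in the gap of width [h] below the top tier [M - th <= l], an edge jumping
   down across the gap outweighs the total gain of all the other edges. *)
Lemma flux_nonpos_of_gap M th k0 : 0 <= th ->
  (forall k, (k < nR)%nat -> l (a k) <= M /\ l (b k) <= M) ->
  (forall k, (k < nR)%nat ->
     M - th <= l (a k) \/ l (a k) < M - th - gap_width eta nR th) ->
  (k0 < nR)%nat -> M - th <= l (a k0) -> l (b k0) < M - th - gap_width eta nR th ->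
  flux nR a b kap l <= 0.
Proof.
  intros Hth Hle Hband Hk0 Ha0 Hb0.
  set (h := gap_width eta nR th) in *.
  pose proof (gap_width_ge1 eta nR th Heta Hth) as Hh. fold h in Hh.
  set (c := exp M * (th + 4 / h) / eta).
  assert (Hc0 : 0 <= c).
  { pose proof (exp_pos M). assert (0 < 4 / h) by (apply Rdiv_lt_0_compat; lra).
    unfold Rdiv. apply Rmult_le_pos; [nra|left; now apply Rinv_0_lt_compat]. }
  eapply Rle_trans.
  { apply (sumR_le_term_plus _ _ c k0 Hk0 Hc0). intros k Hk. destruct (Hle k Hk).
    apply flux_term_le; auto; lra. }
  pose proof (flux_term_le_neg eta (kap k0) (l (a k0)) (l (b k0)) M th h
                Heta ltac:(lra) (proj1 (Hkap k0 Hk0)) Ha0 ltac:(lra)).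
  pose proof (gap_width_spec eta nR th Heta Hth) as Hspec. fold h in Hspec.
  assert (INR nR * c <= exp M * (eta * exp (- th) * h)); [|lra].
  replace (INR nR * c) with (exp M * (INR nR * ((th + 4 / h) / eta))) by (unfold c, Rdiv; ring).
  apply Rmult_le_compat_l; [left; apply exp_pos|auto].
Qed.

Variable n : nat.
Hypothesis Hab : forall k, (k < nR)%nat -> (a k < n)%nat /\ (b k < n)%nat.
Hypothesis Hreach : forall u v, (u < n)%nat -> (v < n)%nat ->
  clos_refl_trans nat (fun u v => exists k, (k < nR)%nat /\ a k = u /\ b k = v) u v.

Lemma flux_nonpos_or_tier_step M u0 th : 0 <= th ->
  (forall u, (u < n)%nat -> l u <= M) -> (u0 < n)%nat -> l u0 = M ->
  flux nR a b kap l <= 0 \/ (forall u, (u < n)%nat -> M - th <= l u) \/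
  (exists u, (u < n)%nat /\ M - th - gap_width eta nR th <= l u < M - th).
Proof.
  intros Hth HM Hu0 Hu0M.
  set (h := gap_width eta nR th).
  destruct (classic (exists u, (u < n)%nat /\ M - th - h <= l u < M - th)) as [|Hgap]; [now right; right|].
  destruct (classic (forall u, (u < n)%nat -> M - th <= l u)) as [|Hnall]; [now right; left|].
  left. apply not_all_ex_not in Hnall as [w Hw].
  assert (Hwn : (w < n)%nat) by (apply NNPP; intro; apply Hw; intro; contradiction).
  assert (Hwl : l w < M - th) by (apply Rnot_le_lt; intro; apply Hw; auto).
  destruct (clos_refl_trans_crossing _ (fun u => (u < n)%nat /\ M - th <= l u) u0 w
              (Hreach u0 w Hu0 Hwn)) as [c [d [[k0 [Hk0 [<- <-]]] [[_ Hc] Hd]]]];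
    [split; [auto|lra]|intros [_ ?]; lra|].
  assert (Hbelow : forall u, (u < n)%nat -> M - th <= l u \/ l u < M - th - h).
  { intros u Hu. destruct (Rle_dec (M - th) (l u)); [now left|right].
    apply Rnot_le_lt. intro. apply Hgap. exists u. split; [auto|lra]. }
  destruct (Hab k0 Hk0) as [_ Hb0].
  apply (flux_nonpos_of_gap M th k0); auto.
  - intros k Hk. destruct (Hab k Hk). split; apply HM; auto.
  - intros k Hk. apply Hbelow, Hab, Hk.
  - destruct (Hbelow (b k0) Hb0); [|auto]. exfalso; apply Hd; auto.
Qed.

Definition above_level (thr : R) (u : nat) : bool := if Rle_dec thr (l u) then true else false.

Fixpoint max_upto (m : nat) : R :=
  match m with O => l O | S m' => Rmax (max_upto m') (l (S m')) end.

Lemma max_upto_ge m u : (u <= m)%nat -> l u <= max_upto m.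
Proof.
  induction m; intros H; simpl; [replace u with O by lia; lra|].
  destruct (Nat.eq_dec u (S m)) as [->|]; [apply Rmax_r|].
  eapply Rle_trans; [apply IHm; lia|apply Rmax_l].
Qed.

Lemma max_upto_attained m : exists u, (u <= m)%nat /\ max_upto m = l u.
Proof.
  induction m as [|m [u [Hu Hm]]]; simpl; [now exists O|].
  unfold Rmax. destruct (Rle_dec (max_upto m) (l (S m))); [exists (S m)|exists u]; split; auto.
Qed.

(* The levels [M - gap_level j] cut the line into [n] gaps; as long as the flux is positive and
   the top tier is not everything, each gap contains a vertex, so the tiers grow one by one. *)
Lemma flux_nonpos_or_spread_bounded :
  flux nR a b kap l <= 0 \/
  (forall u v, (u < n)%nat -> (v < n)%nat -> l v - l u <= gap_level eta nR n).
Proof.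
  destruct (Nat.eq_dec n 0) as [Hn0|Hn]; [right; intros; lia|].
  set (M := max_upto (n - 1)).
  assert (HM : forall u, (u < n)%nat -> l u <= M) by (intros; apply max_upto_ge; lia).
  destruct (max_upto_attained (n - 1)) as [u0 [Hu0 Hu0M]]. fold M in Hu0M.
  set (tier := fun j => filter (above_level (M - gap_level eta nR j)) (seq 0 n)).
  assert (Hind : forall j, (j <= n)%nat -> flux nR a b kap l <= 0 \/
     (forall u v, (u < n)%nat -> (v < n)%nat -> l v - l u <= gap_level eta nR n) \/
     (j < length (tier j))%nat).
  { induction j as [|j IHj]; intros Hj.
    - right; right. eapply Nat.le_lt_trans; [|apply (length_filter_lt (fun _ => false))];
        [lia|discriminate|].
      exists u0. split; [apply in_seq; lia|]. unfold above_level. simpl.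
      destruct (Rle_dec (M - 0) (l u0)); [auto|lra].
    - destruct (IHj ltac:(lia)) as [|[|Hcount]]; [now left|now right; left|].
      pose proof (gap_level_nonneg eta nR j Heta) as Hth.
      destruct (flux_nonpos_or_tier_step M u0 (gap_level eta nR j) Hth HM ltac:(lia) (eq_sym Hu0M))
        as [|[Htop|[u [Hu Hband]]]]; [now left| |].
      + right; left. intros u v Hu Hv. specialize (Htop u Hu). specialize (HM v Hv).
        pose proof (gap_level_mono eta nR j n Heta ltac:(lia)). lra.
      + right; right. apply Nat.le_lt_trans with (length (tier j)); [lia|].
        apply length_filter_lt; simpl; unfold above_level.
        * intros x _. destruct (Rle_dec (M - gap_level eta nR j) (l x)); [|discriminate].
          destruct (Rle_dec (M - _) (l x)); [auto|].
          pose proof (gap_width_ge1 eta nR _ Heta Hth). lra.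
        * exists u. split; [apply in_seq; lia|].
          destruct (Rle_dec (M - _) (l u)); [|lra].
          destruct (Rle_dec (M - gap_level eta nR j) (l u)); [lra|auto]. }
  destruct (Hind n (le_n n)) as [|[|Hcount]]; auto.
  pose proof (filter_length_le (above_level (M - gap_level eta nR n)) (seq 0 n)) as Hlen.
  rewrite length_seq in Hlen. unfold tier in Hcount. lia.
Qed.

End Flux.

(** * Bounded parts of an affine subspace and the free energy *)

Lemma ln_le_compat x y : 0 < x -> x <= y -> ln x <= ln y.
Proof. intros Hx [H| ->]; [left; now apply ln_increasing|lra]. Qed.

(* [z (ln x - ln x0)] is superlinear in [|z|], [z = x - x0]: it beats [(M0 + 1) |z|] as soon as
   [|ln x - ln x0| >= M0 + 1], and otherwise [|z| <= c]. *)
Lemma log_gap_superlinear x x0 M0 : 0 < x -> 0 < x0 -> 0 <= M0 ->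
  let z := x - x0 in let w := ln x - ln x0 in let c := x0 * (exp (M0 + 1) + 1) in
  - M0 * c <= z * w - M0 * Rabs z /\ Rabs z <= z * w - M0 * Rabs z + (M0 + 1) * c.
Proof.
  intros Hx Hx0 HM z w c.
  assert (Hzw : z * w = Rabs z * Rabs w).
  { unfold z, w. destruct (Rle_dec x0 x).
    - pose proof (ln_le_compat x0 x Hx0 r). rewrite !Rabs_right by lra. reflexivity.
    - assert (ln x < ln x0) by (apply ln_increasing; lra). rewrite !Rabs_left by lra. ring. }
  rewrite Hzw.
  assert (Hxe : x = x0 * exp w).
  { unfold w, Rminus. rewrite exp_plus, exp_Ropp, !exp_ln by auto. field. lra. }
  pose proof (exp_pos (M0 + 1)). pose proof (Rabs_pos z). pose proof (Rabs_pos w).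
  assert (Hc : 0 <= c) by (unfold c; nra).
  destruct (Rle_dec (M0 + 1) (Rabs w)).
  - assert (Rabs z <= Rabs z * Rabs w - M0 * Rabs z) by nra. split; nra.
  - assert (exp w <= exp (M0 + 1)) by (apply exp_le_compat; pose proof (Rle_abs w); lra).
    assert (x <= x0 * exp (M0 + 1)) by (rewrite Hxe; apply Rmult_le_compat_l; lra).
    assert (Rabs z <= c) by (unfold z, c; apply Rabs_le; split; nra).
    split; nra.
Qed.

Lemma coord_le_of_log_gap_sum N (x x0 : nat -> R) M0 : 0 <= M0 ->
  (forall i, (i < N)%nat -> 0 < x i) -> (forall i, (i < N)%nat -> 0 < x0 i) ->
  sumR N (fun j => (x j - x0 j) * (ln (x j) - ln (x0 j)) - M0 * Rabs (x j - x0 j)) <= 0 ->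
  let c := fun j => x0 j * (exp (M0 + 1) + 1) in
  forall i, (i < N)%nat -> x i <= x0 i + M0 * sumR N c + (M0 + 1) * c i.
Proof.
  intros HM Hx Hx0 Hsum c i Hi.
  set (g := fun j => (x j - x0 j) * (ln (x j) - ln (x0 j)) - M0 * Rabs (x j - x0 j)) in *.
  assert (Hg : forall j, (j < N)%nat -> - M0 * c j <= g j /\ Rabs (x j - x0 j) <= g j + (M0 + 1) * c j)
    by (intros j Hj; apply log_gap_superlinear; auto).
  assert (Hgi : g i + M0 * c i <= sumR N (fun j => g j + M0 * c j)).
  { apply (sumR_ge_term N (fun j => g j + M0 * c j)); auto.
    intros j Hj. destruct (Hg j Hj). lra. }
  rewrite sumR_plus, sumR_scal_l in Hgi. destruct (Hg i Hi).
  pose proof (Rle_abs (x i - x0 i)).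
  assert (0 <= c i) by (pose proof (exp_pos (M0 + 1)); pose proof (Hx0 i Hi); unfold c; nra).
  nra.
Qed.

Lemma span_proj_log_inner_le N m (E d : nat -> nat -> R) (z ln_x : nat -> R) Th : 0 <= Th ->
  (forall j, (j < N)%nat -> z j = span_proj N m E d z j) ->
  (forall k, (k < m)%nat -> Rabs (sumR N (fun i => d k i * ln_x i)) <= Th) ->
  sumR N (fun j => z j * ln_x j)
    <= Th * sumR m (fun k => sumR N (fun i => Rabs (E k i))) * sumR N (fun j => Rabs (z j)).
Proof.
  intros HTh Hz Hd. set (Z := sumR N (fun j => Rabs (z j))).
  set (ck := fun k => sumR N (fun i => E k i * z i)).
  rewrite (sumR_ext N _ (fun j => sumR m (fun k => ck k * (d k j * ln_x j)))).
  2:{ intros j Hj. rewrite Hz at 1 by auto. unfold span_proj.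
      rewrite <- sumR_scal_r. apply sumR_ext; intros; unfold ck; ring. }
  rewrite sumR_exchange, Rmult_assoc, <- sumR_scal_r, <- sumR_scal_l.
  apply sumR_le. intros k Hk. rewrite sumR_scal_l.
  assert (Hck : Rabs (ck k) <= sumR N (fun i => Rabs (E k i)) * Z).
  { eapply Rle_trans; [apply Rabs_sumR_le|]. rewrite <- sumR_scal_r. apply sumR_le.
    intros i Hi. rewrite Rabs_mult. apply Rmult_le_compat_l; [apply Rabs_pos|].
    apply (sumR_ge_term N (fun j => Rabs (z j))); auto. intros; apply Rabs_pos. }
  eapply Rle_trans; [apply Rle_abs|]. rewrite Rabs_mult, Rmult_comm.
  apply Rmult_le_compat; auto using Rabs_pos.
Qed.

(* Within [x0 + span d], the region where [ln x] is almost orthogonal to every [d_k] is bounded: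
   there [<x - x0, ln x - ln x0>] grows only linearly in [|x - x0|], while it is superlinear. *)
Lemma bounded_of_log_almost_orthogonal N m (E d : nat -> nat -> R) (x0 : nat -> R) Th :
  0 <= Th -> (forall i, (i < N)%nat -> 0 < x0 i) ->
  exists B, forall x, (forall i, (i < N)%nat -> 0 < x i) ->
    (forall j, (j < N)%nat -> x j - x0 j = span_proj N m E d (fun i => x i - x0 i) j) ->
    (forall k, (k < m)%nat -> Rabs (sumR N (fun i => d k i * ln (x i))) <= Th) ->
    forall i, (i < N)%nat -> x i <= B.
Proof.
  intros HTh Hx0.
  set (M0 := Th * sumR m (fun k => sumR N (fun i => Rabs (E k i))) + sumR N (fun j => Rabs (ln (x0 j)))).
  set (c := fun j => x0 j * (exp (M0 + 1) + 1)).
  assert (HM0 : 0 <= M0).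
  { unfold M0. assert (0 <= sumR m (fun k => sumR N (fun i => Rabs (E k i))))
      by (apply sumR_nonneg; intros; apply sumR_nonneg; intros; apply Rabs_pos).
    assert (0 <= sumR N (fun j => Rabs (ln (x0 j)))) by (apply sumR_nonneg; intros; apply Rabs_pos).
    nra. }
  assert (Hc : forall j, (j < N)%nat -> 0 <= c j)
    by (intros j Hj; pose proof (exp_pos (M0 + 1)); pose proof (Hx0 j Hj); unfold c; nra).
  exists (sumR N (fun i => x0 i + M0 * sumR N c + (M0 + 1) * c i)).
  intros x Hx Hcls Hlog i Hi.
  eapply Rle_trans; [apply (coord_le_of_log_gap_sum N x x0 M0); auto|].
  - set (z := fun j => x j - x0 j).
    pose proof (span_proj_log_inner_le N m E d z (fun j => ln (x j)) Th HTh Hcls Hlog).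
    assert (- sumR N (fun j => z j * ln (x0 j))
            <= sumR N (fun j => Rabs (ln (x0 j))) * sumR N (fun j => Rabs (z j))).
    { apply Rle_trans with (Rabs (sumR N (fun j => z j * ln (x0 j))));
        [rewrite <- Rabs_Ropp; apply Rle_abs|].
      rewrite <- sumR_scal_r. eapply Rle_trans; [apply Rabs_sumR_le|]. apply sumR_le. intros j Hj.
      rewrite Rabs_mult, Rmult_comm. apply Rmult_le_compat_l; [apply Rabs_pos|].
      apply (sumR_ge_term N (fun j => Rabs (z j))); auto. intros; apply Rabs_pos. }
    rewrite sumR_minus, sumR_scal_l.
    rewrite (sumR_ext N _ (fun j => z j * ln (x j) - z j * ln (x0 j))) by (intros; unfold z; ring).
    rewrite sumR_minus. unfold M0, z in *. lra.
  - apply (sumR_ge_term N (fun i => x0 i + M0 * sumR N c + (M0 + 1) * c i)); auto.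
    intros j Hj. pose proof (Hx0 j Hj). pose proof (Hc j Hj).
    assert (0 <= sumR N c) by (apply sumR_nonneg; auto). nra.
Qed.

Definition free_energy (N : nat) (x : nat -> R) : R := sumR N (fun i => x i * ln (x i) - x i).

Lemma xlnx_ge x : 0 < x -> -1 <= x * ln x - x.
Proof.
  intros Hx. pose proof (exp_ineq1_le (ln (/ x))) as Hexp.
  rewrite exp_ln, ln_Rinv in Hexp by auto using Rinv_0_lt_compat.
  assert (Hmul : x * (1 + - ln x) <= x * / x) by (apply Rmult_le_compat_l; lra).
  rewrite Rinv_r in Hmul by lra. nra.
Qed.

Lemma le_of_xlnx_le x C : 0 < x -> x * ln x - x <= C -> x <= Rmax (exp 2) C.
Proof.
  intros Hx H. destruct (Rle_dec x (exp 2)); [eapply Rle_trans; [eauto|apply Rmax_l]|].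
  assert (Hln : ln (exp 2) < ln x) by (apply ln_increasing; [apply exp_pos|lra]).
  rewrite ln_exp in Hln. eapply Rle_trans; [|apply Rmax_r]. nra.
Qed.

Lemma free_energy_le_of_bounded N (x : nat -> R) B : (forall i, (i < N)%nat -> 0 < x i <= B) ->
  free_energy N x <= INR N * (Rmax B 1 * ln (Rmax B 1)).
Proof.
  intros H. unfold free_energy. rewrite <- sumR_const. apply sumR_le.
  intros i Hi. destruct (H i Hi) as [H1 H2]. set (B' := Rmax B 1).
  assert (1 <= B') by apply Rmax_r. assert (B <= B') by apply Rmax_l.
  assert (ln (x i) <= ln B') by (apply ln_le_compat; lra).
  assert (0 <= ln B') by (rewrite <- ln_1; apply ln_le_compat; lra).
  assert (x i * ln (x i) <= x i * ln B') by (apply Rmult_le_compat_l; lra).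
  assert (x i * ln B' <= B' * ln B') by (apply Rmult_le_compat_r; lra).
  lra.
Qed.

Lemma coord_le_of_free_energy_le N (x : nat -> R) c i : (i < N)%nat ->
  (forall j, (j < N)%nat -> 0 < x j) -> free_energy N x <= c -> x i <= Rmax (exp 2) (c + INR N).
Proof.
  intros Hi Hx HV. apply le_of_xlnx_le; auto.
  assert (Hi1 : x i * ln (x i) - x i + 1 <= sumR N (fun j => x j * ln (x j) - x j + 1)).
  { apply (sumR_ge_term N (fun j => x j * ln (x j) - x j + 1)); auto.
    intros j Hj. pose proof (xlnx_ge (x j) (Hx j Hj)). lra. }
  rewrite sumR_plus, sumR_const in Hi1. unfold free_energy in HV. lra.
Qed.

(** * Mass-action vector fields *)

Definition src (G : network) (k : nat) : nat := fst (nth k (reactions G) (0%nat, 0%nat)).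
Definition tgt (G : network) (k : nat) : nat := snd (nth k (reactions G) (0%nat, 0%nat)).

Definition reaction_vector (G : network) (k i : nat) : R :=
  INR (coef (cplx G (tgt G k)) i) - INR (coef (cplx G (src G k)) i).

Definition log_monomial (N : nat) (G : network) (x : nat -> R) (a : nat) : R :=
  sumR N (fun i => INR (coef (cplx G a) i) * ln (x i)).

(* [x^y / x_i], written without division. *)
Definition monomial_div (N : nat) (y : list nat) (i : nat) (x : nat -> R) : R :=
  prodR N (fun j => if (j =? i)%nat then x j ^ (coef y j - 1) else x j ^ coef y j).

Lemma monomialE N y x : monomial N y x = prodR N (fun i => x i ^ coef y i).
Proof. apply fold_right_Rmult_seq. Qed.

Lemma mass_action_rhsE N G kappa t x i : mass_action_rhs N G kappa t x i =
  sumR (length (reactions G))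
    (fun k => kappa k t * monomial N (cplx G (src G k)) x * reaction_vector G k i).
Proof. apply fold_right_Rplus_seq. Qed.

Lemma monomial_factor N y i x : (i < N)%nat -> (1 <= coef y i)%nat ->
  monomial N y x = x i * monomial_div N y i x.
Proof.
  intros Hi Hc. rewrite monomialE. unfold monomial_div.
  induction N as [|N IHN]; [lia|]. simpl.
  destruct (Nat.eq_dec i N) as [->|].
  - rewrite Nat.eqb_refl.
    rewrite (prodR_ext N (fun j => if (j =? N)%nat then _ else _) (fun j => x j ^ coef y j))
      by (intros j Hj; destruct (Nat.eqb_spec j N); [lia|auto]).
    replace (coef y N) with (S (coef y N - 1)) at 1 by lia. simpl. ring.
  - rewrite IHN by lia. destruct (Nat.eqb_spec N i); [lia|ring].
Qed.

Lemma monomial_exp N G x a : (forall i, (i < N)%nat -> 0 < x i) ->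
  monomial N (cplx G a) x = exp (log_monomial N G x a).
Proof.
  intros H. rewrite monomialE. unfold log_monomial. rewrite <- prodR_exp.
  apply prodR_ext. intros i Hi. rewrite <- ln_pow, exp_ln by auto using pow_lt. reflexivity.
Qed.

Lemma reaction_vector_log N G x k :
  sumR N (fun i => reaction_vector G k i * ln (x i))
  = log_monomial N G x (tgt G k) - log_monomial N G x (src G k).
Proof. unfold log_monomial, reaction_vector. rewrite <- sumR_minus. apply sumR_ext; intros; ring. Qed.

(* The free energy dissipation along a mass-action field is the flux of the log-monomials. *)
Lemma mass_action_rhs_log_inner N G kappa t x : (forall i, (i < N)%nat -> 0 < x i) ->
  sumR N (fun i => mass_action_rhs N G kappa t x i * ln (x i))
  = flux (length (reactions G)) (src G) (tgt G) (fun k => kappa k t) (log_monomial N G x).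
Proof.
  intros Hx. unfold flux.
  rewrite (sumR_ext N _ (fun i => sumR (length (reactions G))
      (fun k => kappa k t * monomial N (cplx G (src G k)) x * (reaction_vector G k i * ln (x i))))).
  2:{ intros i _. rewrite mass_action_rhsE, <- sumR_scal_r. apply sumR_ext; intros; ring. }
  rewrite sumR_exchange. apply sumR_ext. intros k _.
  now rewrite sumR_scal_l, reaction_vector_log, monomial_exp.
Qed.

(* Only reactions consuming [S_i] can decrease [x_i], at a rate proportional to [x_i]. *)
Lemma reaction_rate_ge_linear N (y y' : list nat) kap eta x i : 0 < eta -> eta < kap < / eta ->
  (forall j, (j < N)%nat -> 0 <= x j) -> (i < N)%nat ->
  let v := INR (coef y' i) - INR (coef y i) in
  - (/ eta * x i * (monomial_div N y i x * Rabs v)) <= kap * monomial N y x * v.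
Proof.
  intros He [Hk1 Hk2] Hx Hi v.
  assert (Hq : 0 <= monomial_div N y i x)
    by (apply prodR_nonneg; intros j Hj; destruct (_ =? _)%nat; apply pow_le; auto).
  pose proof (Hx i Hi). pose proof (Rabs_pos v).
  assert (0 < / eta) by now apply Rinv_0_lt_compat.
  destruct (coef y i) eqn:Hc.
  - assert (0 <= v) by (unfold v; simpl; pose proof (pos_INR (coef y' i)); lra).
    assert (0 <= monomial N y x)
      by (rewrite monomialE; apply prodR_nonneg; intros; apply pow_le; auto).
    assert (0 <= kap * monomial N y x * v) by (repeat apply Rmult_le_pos; lra).
    assert (0 <= / eta * x i * (monomial_div N y i x * Rabs v)) by (repeat apply Rmult_le_pos; lra).
    lra.
  - rewrite (monomial_factor N y i x Hi) by lia.
    set (q := monomial_div N y i x) in *.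
    pose proof (Rle_abs (- v)) as Habs. rewrite Rabs_Ropp in Habs.
    assert (0 <= kap * (x i * q)) by (apply Rmult_le_pos; nra).
    assert (kap * (x i * q) * - v <= kap * (x i * q) * Rabs v) by (apply Rmult_le_compat_l; auto).
    assert (kap * (x i * q) * Rabs v <= / eta * (x i * q) * Rabs v)
      by (apply Rmult_le_compat_r; [|apply Rmult_le_compat_r]; nra).
    nra.
Qed.

Lemma mass_action_rhs_ge_linear N G kappa t eta x i : 0 < eta ->
  (forall k, (k < length (reactions G))%nat -> eta < kappa k t < / eta) ->
  (forall j, (j < N)%nat -> 0 <= x j) -> (i < N)%nat ->
  - (/ eta * x i * sumR (length (reactions G))
        (fun k => monomial_div N (cplx G (src G k)) i x * Rabs (reaction_vector G k i)))
  <= mass_action_rhs N G kappa t x i.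
Proof.
  intros He Hk Hx Hi. rewrite mass_action_rhsE, <- sumR_scal_l.
  rewrite <- (Rmult_1_l (sumR _ _)), Ropp_mult_distr_l, <- sumR_scal_l.
  apply sumR_le. intros k Hkk. rewrite <- Ropp_mult_distr_l, Rmult_1_l.
  apply (reaction_rate_ge_linear N (cplx G (src G k)) (cplx G (tgt G k)) (kappa k t)); auto.
Qed.

Lemma src_tgt_lt N G k : is_network N G -> (k < length (reactions G))%nat ->
  (src G k < length (complexes G))%nat /\ (tgt G k < length (complexes G))%nat.
Proof.
  intros [_ [_ [HR _]]] Hk. unfold src, tgt.
  destruct (HR (nth k (reactions G) (0%nat, 0%nat))) as [H1 [H2 _]]; [now apply nth_In|auto].
Qed.

Lemma reach_reactions G u v : reach G u v ->
  clos_refl_trans nat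
    (fun u v => exists k, (k < length (reactions G))%nat /\ src G k = u /\ tgt G k = v) u v.
Proof.
  induction 1 as [u v H| |]; [|apply rt_refl|eapply rt_trans; eauto].
  apply rt_step. destruct (In_nth _ _ (0%nat, 0%nat) H) as [k [Hk Hnth]].
  exists k. unfold src, tgt. now rewrite Hnth.
Qed.

(** * Trajectories *)

Section Solution.

Variables (N : nat) (G : network) (kappa : nat -> R -> R) (eta : R).
Variables (x0 : nat -> R) (phi : R -> nat -> R).
Hypothesis HG : is_network N G.
Hypothesis Hreach : forall a b, (a < length (complexes G))%nat -> (b < length (complexes G))%nat ->
  reach G a b.
Hypothesis Heta : 0 < eta.
Hypothesis Hkappa : forall k t, (k < length (reactions G))%nat -> 0 <= t ->
  eta < kappa k t < / eta.
Hypothesis Hx0 : forall i, (i < N)%nat -> 0 < x0 i.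
Hypothesis Hphi : is_solution N G kappa x0 phi.

Local Notation nR := (length (reactions G)).

Lemma solution_continuous t i : 0 <= t -> (i < N)%nat -> continuity_pt (fun s => phi s i) t.
Proof. intros Ht Hi. eapply derivable_pt_lim_continuity_pt, Hphi; auto. Qed.

(* At the first time [ts] some coordinate [i] vanishes, Gronwall on [0, ts] keeps it positive. *)
Lemma solution_pos t i : 0 <= t -> (i < N)%nat -> 0 < phi t i.
Proof.
  intros Ht Hi. apply Rnot_le_lt. intro Hneg.
  destruct (first_nonpos_time (fun s => minR N (phi s)) 0 t Ht) as [ts [[Hts0 Hts] [Hmin Hbef]]].
  - intros s Hs. apply continuity_pt_minR. intros; apply solution_continuous; auto; lra.
  - apply minR_pos. intros j Hj. destruct Hphi as [H0 _]. rewrite H0; auto.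
  - eapply Rle_trans; [apply (minR_le N (phi t) i Hi)|auto].
  - destruct (minR_nonpos N (phi ts) Hmin) as [j [Hj Hphij]].
    assert (Hpos : forall s k, 0 <= s < ts -> (k < N)%nat -> 0 < phi s k)
      by (intros s k Hs Hk; eapply Rlt_le_trans; [apply (Hbef s Hs)|apply minR_le; auto]).
    set (Q := fun s => sumR nR (fun k =>
                monomial_div N (cplx G (src G k)) j (phi s) * Rabs (reaction_vector G k j))).
    assert (HQ : forall s, 0 <= s <= ts -> continuity_pt Q s).
    { intros s Hs. apply continuity_pt_sumR. intros k _.
      apply (continuity_pt_mult _ (fun _ => Rabs (reaction_vector G k j)));
        [|now apply continuity_pt_const].
      apply continuity_pt_prodR. intros l Hl.
      destruct (l =? j)%nat; apply continuity_pt_pow, solution_continuous; auto; lra. }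
    destruct (continuity_ab_maj Q 0 ts ltac:(lra) HQ) as [smax [Hsmax _]].
    assert (0 < phi ts j); [|lra].
    apply (pos_of_deriv_ge_linear (fun s => phi s j)
             (fun s => mass_action_rhs N G kappa s (phi s) j) (Rmax 0 (Q smax) / eta) ts Hts0).
    + intros s Hs. apply Hphi; auto; lra.
    + intros s Hs.
      pose proof (mass_action_rhs_ge_linear N G kappa s eta (phi s) j Heta
                    (fun k Hk => Hkappa k s Hk ltac:(lra))
                    (fun k Hk => Rlt_le _ _ (Hpos s k ltac:(lra) Hk)) Hj) as Hlow.
      fold (Q s) in Hlow.
      assert (Q s <= Rmax 0 (Q smax)) by (eapply Rle_trans; [apply Hsmax; lra|apply Rmax_r]).
      assert (0 < phi s j) by (apply Hpos; auto; lra).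
      assert (0 < / eta) by now apply Rinv_0_lt_compat.
      assert (phi s j * / eta * Q s <= phi s j * / eta * Rmax 0 (Q smax))
        by (apply Rmult_le_compat_l; [apply Rmult_le_pos|]; lra).
      unfold Rdiv. lra.
    + destruct Hphi as [H0 _]. rewrite H0; auto.
Qed.

Lemma solution_in_stoich_class E : projects_onto N nR E (reaction_vector G) ->
  forall t j, 0 <= t -> (j < N)%nat ->
  phi t j - x0 j = span_proj N nR E (reaction_vector G) (fun i => phi t i - x0 i) j.
Proof.
  intros HE t j Ht Hj. destruct Hphi as [H0 Hd].
  set (P := span_proj N nR E (reaction_vector G)).
  set (y := fun s => (phi s j - x0 j) - P (fun i => phi s i - x0 i) j).
  assert (Hy0 : y 0 = 0).
  { unfold y, P, span_proj. rewrite H0 by auto.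
    rewrite (sumR_eq0 nR); [ring|]. intros k _.
    rewrite (sumR_eq0 N); [ring|]. intros i Hi. rewrite H0 by auto. ring. }
  assert (Hyd : forall s, 0 <= s -> derivable_pt_lim y s 0).
  { intros s Hs. set (f := fun s i => mass_action_rhs N G kappa s (phi s) i).
    replace 0 with (f s j - 0 - P (fun i => f s i - 0) j).
    - apply (derivable_pt_lim_minus (fun s => phi s j - x0 j)).
      + apply derivable_pt_lim_minus; [apply Hd; auto|apply derivable_pt_lim_const].
      + apply derivable_pt_lim_span_proj. intros i Hi.
        apply derivable_pt_lim_minus; [apply Hd; auto|apply derivable_pt_lim_const].
    - set (c := fun r => kappa r s * monomial N (cplx G (src G r)) (phi s)).
      unfold P. rewrite (span_proj_ext _ _ _ _ _ (fun i => sumR nR (fun r => c r * reaction_vector G r i)))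
        by (intros; unfold f, c; rewrite mass_action_rhsE; cbv beta; ring).
      rewrite span_proj_lincomb by auto. unfold f, c. rewrite mass_action_rhsE. cbv beta. ring. }
  destruct Ht as [Ht| <-]; [|unfold y in Hy0; lra].
  destruct (MVT_cor2 y (fun _ => 0) 0 t Ht (fun c Hc => Hyd c ltac:(lra))) as [c [Hc _]].
  unfold y in *. lra.
Qed.

Lemma free_energy_deriv t : 0 <= t ->
  derivable_pt_lim (fun s => free_energy N (phi s)) t
    (flux nR (src G) (tgt G) (fun k => kappa k t) (log_monomial N G (phi t))).
Proof.
  intros Ht. rewrite <- mass_action_rhs_log_inner by (intros; apply solution_pos; auto).
  apply derivable_pt_lim_sumR. intros i Hi.
  pose proof (solution_pos t i Ht Hi). destruct Hphi as [_ Hd].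
  set (r := mass_action_rhs N G kappa t (phi t) i).
  replace (r * ln (phi t i)) with (r * ln (phi t i) + phi t i * (/ phi t i * r) - r) by (field; lra).
  apply (derivable_pt_lim_minus (fun s => phi s i * ln (phi s i)) (fun s => phi s i)); [|now apply Hd].
  apply (derivable_pt_lim_mult (fun s => phi s i) (fun s => ln (phi s i))); [now apply Hd|].
  apply (derivable_pt_lim_comp (fun s => phi s i) ln); [now apply Hd|].
  now apply derivable_pt_lim_ln.
Qed.

(* Where the free energy is large, the trajectory is outside the bounded region of
   [bounded_of_log_almost_orthogonal], so the log-monomials are spread out and the flux is
   nonpositive. *)
Lemma free_energy_bounded : exists c, forall t, 0 <= t -> free_energy N (phi t) <= c.
Proof.
  destruct (projects_onto_exists N nR (reaction_vector G)) as [E HE].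
  set (n := length (complexes G)).
  destruct (bounded_of_log_almost_orthogonal N nR E (reaction_vector G) x0 (gap_level eta nR n)
              (gap_level_nonneg eta nR n Heta) Hx0) as [B HB].
  set (c := Rmax (free_energy N (phi 0)) (INR N * (Rmax B 1 * ln (Rmax B 1)))).
  exists c. apply (le_of_deriv_nonpos_above _ _ c free_energy_deriv); [|apply Rmax_l].
  intros s Hs Hc.
  destruct (flux_nonpos_or_spread_bounded nR (src G) (tgt G) (fun k => kappa k s)
              (log_monomial N G (phi s)) eta Heta (fun k Hk => Hkappa k s Hk Hs) n
              (fun k Hk => src_tgt_lt N G k HG Hk)
              (fun u v Hu Hv => reach_reactions G u v (Hreach u v Hu Hv))) as [|Hspread]; auto.
  exfalso.
  assert (Hbnd : forall i, (i < N)%nat -> 0 < phi s i <= B).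
  { intros i Hi. split; [now apply solution_pos|].
    apply (HB (phi s)); auto.
    - intros; now apply solution_pos.
    - intros; now apply solution_in_stoich_class.
    - intros k Hk. rewrite reaction_vector_log. destruct (src_tgt_lt N G k HG Hk) as [Hsrc Htgt].
      pose proof (Hspread (tgt G k) (src G k) Htgt Hsrc).
      apply Rabs_le. split; [lra|now apply Hspread]. }
  pose proof (free_energy_le_of_bounded N (phi s) B Hbnd).
  pose proof (Rmax_r (free_energy N (phi 0)) (INR N * (Rmax B 1 * ln (Rmax B 1)))).
  unfold c in Hc. lra.
Qed.

Lemma solution_bounded : exists B, forall t i, 0 <= t -> (i < N)%nat -> 0 < phi t i <= B.
Proof.
  destruct free_energy_bounded as [c Hc].
  exists (Rmax (exp 2) (c + INR N)). intros t i Ht Hi. split; [now apply solution_pos|].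
  apply coord_le_of_free_energy_le; auto. intros; now apply solution_pos.
Qed.

End Solution.

Lemma vnorm_le_of_coord_le N x B : (forall i, (i < N)%nat -> 0 <= x i <= B) ->
  vnorm N x <= sqrt (INR N * (B * B)).
Proof.
  intros H. unfold vnorm. rewrite fold_right_Rplus_seq. apply sqrt_le_1_alt.
  rewrite <- sumR_const. apply sumR_le. intros i Hi. destruct (H i Hi). simpl. nra.
Qed.

Theorem mainTheorem6 (N : nat) (G : network) (kappa : nat -> R -> R)
  (HG : is_network N G)
  (Hwr : weakly_reversible G)
  (Hlc : single_linkage_class G)
  (Hk : bounded_kinetics G kappa)
  (x0 : nat -> R) (Hx0 : forall i, (i < N)%nat -> 0 < x0 i)
  (phi : R -> nat -> R) (Hphi : is_solution N G kappa x0 phi) :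
  exists M T, forall t, T <= t -> vnorm N (phi t) <= M.
Proof.
  destruct Hk as [eta [Heta Hkappa]].
  assert (Hreach : forall a b, (a < length (complexes G))%nat -> (b < length (complexes G))%nat ->
            reach G a b) by (intros; apply Hwr, Hlc; auto).
  destruct (solution_bounded N G kappa eta x0 phi HG Hreach Heta Hkappa Hx0 Hphi) as [B HB].
  exists (sqrt (INR N * (B * B))), 0. intros t Ht.
  apply vnorm_le_of_coord_le. intros i Hi. destruct (HB t i Ht Hi). split; lra.
Qed.
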